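(* Let $N\ge 1$, let $\gamma_1,\dots,\gamma_N>0$, let $G$ be an $N\times N$ complex Hermitian matrix and $F$ an $N\times N$ complex symmetric matrix. Define $\Gamma=\mathrm{diag}(\gamma_1,\dots,\gamma_N,\gamma_1,\dots,\gamma_N)$, $$\mathcal{M}=\begin{pmatrix}\mathrm{Im}[G+F] & \mathrm{Re}[G-F]\\ -\mathrm{Re}[G+F] & -\mathrm{Im}[G+F]^{\mathrm T}\end{pmatrix},\qquad \mathbb{J}=\begin{pmatrix}0 & I\\ -I & 0\end{pmatrix},$$ with $I$ the $N\times N$ identity, and assume $\mathrm{i}\omega\mathbb{I}+\Gamma-\mathcal{M}$ is invertible for all $\omega\in\mathbb{R}$ ($\mathbb{I}$ the $2N\times2N$ identity). Let $S(\omega)=\sqrt{2\Gamma}\,(\mathrm{i}\omega\mathbb{I}+\Gamma-\mathcal{M})^{-1}\sqrt{2\Gamma}-\mathbb{I}$. Then $\mathcal{M}$ is a Hamiltonian matrix, i.e. $(\mathbb{J}\mathcal{M})^{\mathrm T}=\mathbb{J}\mathcal{M}$, $\Gamma$ is skew-Hamiltonian, i.e. $(\mathbb{J}\Gamma)^{\mathrm T}=-\mathbb{J}\Gamma$, and for every $\omega\in\mathbb{R}$ the matrix $S(\omega)$ is conjugate-symplectic: $S(\omega)\,\mathbb{J}\,S(\omega)^\dagger=\mathbb{J}$.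
   Context: $\mathrm{Re}$, $\mathrm{Im}$ are entrywise; ${}^{\mathrm T}$ is transpose and ${}^\dagger$ is conjugate transpose; $\sqrt{2\Gamma}$ is the entrywise square root of the diagonal matrix $2\Gamma$. *)

From HB Require Import structures.
From mathcomp Require Import all_boot all_order all_algebra.
From mathcomp Require Import complex reals.
Set Implicit Arguments. Unset Strict Implicit. Unset Printing Implicit Defensive.
Import Order.TTheory GRing.Theory Num.Theory.
Local Open Scope ring_scope.
Local Open Scope complex_scope.

Section Defs.
Variable R : realType.
Local Notation C := R[i].
Variable N : nat.

Definition ReM (A : 'M[C]_N) : 'M[C]_N := map_mx (fun z => (complex.Re z)%:C) A.
Definition ImM (A : 'M[C]_N) : 'M[C]_N := map_mx (fun z => (complex.Im z)%:C) A.

Definition adjM m n (A : 'M[C]_(m, n)) : 'M[C]_(n, m) := map_mx (@conjc R) A^T.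

Definition hermitianM (A : 'M[C]_N) : Prop := adjM A = A.
Definition symmetricM (A : 'M[C]_N) : Prop := A^T = A.

Definition calM (G F : 'M[C]_N) : 'M[C]_(N + N) :=
  block_mx (ImM (G + F)) (ReM (G - F)) (- ReM (G + F)) (- (ImM (G + F))^T).

Definition Jmx : 'M[C]_(N + N) := block_mx 0 1%:M (- 1%:M) 0.

Definition Gam (g : 'I_N -> R) : 'M[C]_(N + N) :=
  let D := diag_mx (\row_i (g i)%:C) in block_mx D 0 0 D.

Definition sqrt2Gam (g : 'I_N -> R) : 'M[C]_(N + N) :=
  let D := diag_mx (\row_i (Num.sqrt (2 * g i))%:C) in block_mx D 0 0 D.

Definition resolv (g : 'I_N -> R) (G F : 'M[C]_N) (w : R) : 'M[C]_(N + N) :=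
  ('i * w%:C)%:M + Gam g - calM G F.

Definition Smat (g : 'I_N -> R) (G F : 'M[C]_N) (w : R) : 'M[C]_(N + N) :=
  sqrt2Gam g *m invmx (resolv g G F w) *m sqrt2Gam g - 1%:M.
End Defs.

From Pilot Require Import Defs.
From HB Require Import structures.
From mathcomp Require Import all_boot all_order all_algebra.
From mathcomp Require Import complex reals.
Import Order.TTheory GRing.Theory Num.Theory.
Local Open Scope ring_scope.
Local Open Scope complex_scope.

(* Since [M] is real and [J M] is symmetric, the resolvent [K := i w + Gamma - M]
   satisfies [J K^+ + K J = 2 J Gamma = J (sqrt (2 Gamma))^2]: the imaginary shift
   cancels between [K] and [K^+] and the Hamiltonian part [M] drops out.  For any
   such [K] and any self-adjoint [Q] commuting with [J], the Cayley-type transform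
   [Q K^-1 Q - 1] preserves the form [J]. *)

Section ConjugateTranspose.
Context {R : realType}.
Local Notation C := R[i].

Lemma conjc_imaginary (w : R) : conjc ('i%R * w%:C) = - ('i%R * w%:C).
Proof. by apply/eqP; rewrite eq_complex /= !(mulr0, mul0r, subr0, addr0, mul1r, oppr0) !eqxx. Qed.

Lemma Re_conjD (x y : C) : complex.Re (conjc x + y) = complex.Re (x + y).
Proof. by case: x => a b; case: y. Qed.

Lemma adjM_mul m n p (A : 'M[C]_(m, n)) (B : 'M[C]_(n, p)) :
  adjM (A *m B) = adjM B *m adjM A.
Proof. by rewrite /adjM trmx_mul map_mxM. Qed.

Lemma adjMD m n (A B : 'M[C]_(m, n)) : adjM (A + B) = adjM A + adjM B.
Proof. by rewrite /adjM linearD /= map_mxD. Qed.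

Lemma adjMB m n (A B : 'M[C]_(m, n)) : adjM (A - B) = adjM A - adjM B.
Proof. by rewrite /adjM linearB /= map_mxB. Qed.

Lemma adjM_scalar n (a : C) : adjM (a%:M : 'M[C]_n) = (conjc a)%:M.
Proof. by rewrite /adjM tr_scalar_mx map_scalar_mx. Qed.

Lemma adjM1 n : adjM (1%:M : 'M[C]_n) = 1%:M.
Proof. by rewrite adjM_scalar rmorph1. Qed.

Lemma adjM_real {m n} {A : 'M[C]_(m, n)} : map_mx conjc A = A -> adjM A = A^T.
Proof. by move=> Areal; rewrite /adjM -map_trmx Areal. Qed.

Lemma adjM_block_diag n (D : 'M[C]_n) :
  adjM (block_mx D 0 0 D) = block_mx (adjM D) 0 0 (adjM D).
Proof. by rewrite /adjM tr_block_mx map_block_mx !trmx0 !map_mx0. Qed.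

Lemma adjM_diag_real n (r : 'I_n -> R) :
  adjM (diag_mx (\row_i (r i)%:C)) = diag_mx (\row_i (r i)%:C).
Proof.
rewrite adjM_real ?tr_diag_mx //; apply/matrixP => i j; rewrite !mxE.
by case: (i == j); rewrite ?mulr1n ?mulr0n ?conjc_real.
Qed.

(* Sandwiching the hypothesis between [invmx K] and its adjoint gives
   [A J Q^2 A^+ = A J + J A^+] for [A := invmx K]; conjugating by [Q], which
   commutes with [J], yields [P J P^+ = P J + J P^+] for [P := Q A Q], and
   this is exactly [(P - 1) J (P - 1)^+ = J]. *)
Lemma cayley_conj_symplectic n (J Q K : 'M[C]_n) :
  K \in unitmx -> Q *m J = J *m Q -> adjM Q = Q ->
  J *m adjM K + K *m J = J *m (Q *m Q) ->
  (Q *m invmx K *m Q - 1%:M) *m J *m adjM (Q *m invmx K *m Q - 1%:M) = J.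
Proof.
move=> Kunit QJ Qself KJ.
set A := invmx K; set B := adjM A.
have AK : A *m K = 1%:M by apply: mulVmx.
have KB : adjM K *m B = 1%:M by rewrite /B -adjM_mul AK adjM1.
have sandwich : A *m J *m (Q *m Q) *m B = A *m J + J *m B.
  by rewrite -(mulmxA A J) -KJ mulmxDr mulmxDl -!mulmxA KB mulmx1 !mulmxA AK mul1mx.
have conjugated :
    Q *m A *m Q *m J *m (Q *m B *m Q) = Q *m A *m Q *m J + J *m (Q *m B *m Q).
  transitivity (Q *m (A *m J *m (Q *m Q) *m B) *m Q).
    by rewrite -[Q *m A *m Q *m J]mulmxA QJ !mulmxA.
  by rewrite sandwich mulmxDr mulmxDl !mulmxA -[Q *m A *m J *m Q]mulmxA -QJ mulmxA QJ.
rewrite adjMB adjM1 !adjM_mul Qself -/B mulmxA.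
by rewrite mulmxBl mul1mx mulmxBr mulmxBl mulmx1 conjugated addrK opprB addrC subrK.
Qed.

End ConjugateTranspose.

Section SymplecticForm.
Variables (R : realType) (N : nat).
Local Notation C := R[i].
Local Notation J := (Jmx R N).

Lemma tr_Jmx : J^T = - J.
Proof. by rewrite /Jmx tr_block_mx !trmx0 trmx1 linearN /= trmx1 opp_block_mx !oppr0 opprK. Qed.

Lemma Jmx_sqr : J *m J = - 1%:M.
Proof.
rewrite /Jmx mulmx_block !(mul0mx, mulmx0, mul1mx, mulmx1, mulNmx, add0r, addr0).
by rewrite (scalar_mx_block N N) opp_block_mx oppr0.
Qed.

Lemma block_diag_mulJmx (D : 'M[C]_N) :
  block_mx D 0 0 D *m J = J *m block_mx D 0 0 D.
Proof.
rewrite /Jmx !mulmx_block.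
by rewrite !(mul0mx, mulmx0, mul1mx, mulmx1, mulNmx, mulmxN, add0r, addr0).
Qed.

Lemma hamiltonian_mulJmx (M : 'M[C]_(N + N)) :
  (J *m M)^T = J *m M -> J *m M^T + M *m J = 0.
Proof.
rewrite trmx_mul tr_Jmx mulmxN => /(congr1 -%R); rewrite opprK => MJ.
have -> : J *m M^T = - (J *m (M^T *m J) *m J).
  by rewrite -mulmxA -(mulmxA M^T) Jmx_sqr !mulmxN mulmx1 opprK.
by rewrite MJ mulmxN mulNmx opprK !mulmxA Jmx_sqr !mulNmx mul1mx addNr.
Qed.

End SymplecticForm.

Section ScatteringMatrix.
Variables (R : realType) (N : nat).
Local Notation C := R[i].
Local Notation J := (Jmx R N).
Variables (g : 'I_N -> R) (G F : 'M[C]_N).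
Hypotheses (hG : hermitianM G) (hF : symmetricM F).

Lemma tr_ReM_hermitian_symmetric (H : 'M[C]_N) :
  symmetricM H -> (Defs.ReM (G + H))^T = Defs.ReM (G + H).
Proof.
move=> hH; apply/matrixP => i j; rewrite !mxE.
have -> : G j i = conjc (G i j) by rewrite -[in LHS]hG /adjM !mxE.
by rewrite -[in H j i]hH mxE Re_conjD.
Qed.

Lemma calM_hamiltonian : (J *m calM G F)^T = J *m calM G F.
Proof.
have symF : symmetricM (- F) by rewrite /symmetricM linearN /= hF.
rewrite /calM /Jmx mulmx_block !(mul0mx, mul1mx, mulNmx, add0r, addr0).
by rewrite tr_block_mx !linearN /= trmxK !tr_ReM_hermitian_symmetric.
Qed.

Lemma conj_calM : map_mx conjc (calM G F) = calM G F.
Proof.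
have conj_ReM (X : 'M[C]_N) : map_mx conjc (Defs.ReM X) = Defs.ReM X.
  by apply/matrixP => i j; rewrite !mxE conjc_real.
have conj_ImM (X : 'M[C]_N) : map_mx conjc (Defs.ImM X) = Defs.ImM X.
  by apply/matrixP => i j; rewrite !mxE conjc_real.
by rewrite /calM map_block_mx !map_mxN map_trmx !conj_ReM !conj_ImM.
Qed.

Lemma adjM_Gam : adjM (Gam g) = Gam g.
Proof. by rewrite /Gam adjM_block_diag adjM_diag_real. Qed.

Lemma adjM_sqrt2Gam : adjM (sqrt2Gam g) = sqrt2Gam g.
Proof. by rewrite /sqrt2Gam adjM_block_diag adjM_diag_real. Qed.

Lemma Gam_mulJmx : Gam g *m J = J *m Gam g.
Proof. exact: block_diag_mulJmx. Qed.

Lemma Gam_skew_hamiltonian : (J *m Gam g)^T = - (J *m Gam g).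
Proof.
by rewrite trmx_mul tr_Jmx mulmxN /Gam tr_block_mx !trmx0 tr_diag_mx block_diag_mulJmx.
Qed.

Lemma sqrt2Gam_sqr : (forall i, 0 <= g i) -> sqrt2Gam g *m sqrt2Gam g = Gam g *+ 2.
Proof.
move=> g_ge0; rewrite /sqrt2Gam /Gam /=; set D := diag_mx _.
have D2 : D *m D = diag_mx (\row_i (g i)%:C) *+ 2.
  rewrite mulmx_diag -linearMn /=; congr diag_mx; apply/rowP => j.
  rewrite !mxE -rmorphM -expr2 sqr_sqrtr ?mulr_ge0 //.
  by rewrite mulr2n mulrDl mul1r rmorphD.
rewrite mulmx_block !(mul0mx, mulmx0, add0r, addr0) D2.
by rewrite [RHS]mulr2n add_block_mx addr0 -!mulr2n.
Qed.

Lemma resolv_adjoint_identity w :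
  J *m adjM (resolv g G F w) + resolv g G F w *m J = J *m (Gam g *+ 2).
Proof.
have JM := @hamiltonian_mulJmx _ _ _ calM_hamiltonian.
rewrite /resolv !adjMB !adjMD (adjM_real conj_calM) adjM_scalar adjM_Gam conjc_imaginary.
rewrite mulmxBr mulmxDr mulmxBl mulmxDl mul_mx_scalar mul_scalar_mx Gam_mulJmx.
rewrite (eqP (_ : J *m (calM G F)^T == - (calM G F *m J))); last by rewrite -addr_eq0 JM.
by rewrite scaleNr opprK addrACA subrr addr0 addrACA addNr add0r mulr2n mulmxDr.
Qed.

End ScatteringMatrix.

Theorem mainTheorem2 (R : realType) (N : nat) (hN : (0 < N)%N)
  (g : 'I_N -> R) (hg : forall i, 0 < g i)
  (G F : 'M[R[i]]_N) (hG : hermitianM G) (hF : symmetricM F)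
  (hinv : forall w : R, resolv g G F w \in unitmx) :
  (Jmx R N *m calM G F)^T = Jmx R N *m calM G F /\
  (Jmx R N *m Gam g)^T = - (Jmx R N *m Gam g) /\
  (forall w : R, Smat g G F w *m Jmx R N *m adjM (Smat g G F w) = Jmx R N).
Proof.
split; first exact: calM_hamiltonian.
split; first exact: Gam_skew_hamiltonian.
move=> w; rewrite /Smat.
apply: (@cayley_conj_symplectic _ _ (Jmx R N) (sqrt2Gam g) _ (hinv w)).
- exact: block_diag_mulJmx.
- exact: adjM_sqrt2Gam.
- by rewrite sqrt2Gam_sqr ?resolv_adjoint_identity // => i; apply: ltW.
Qed.
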